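(* Let $x,y\ge 0$, not both zero, and $z>0$ (the approximation is intended for the regime $x,y\ll z$). Let $a=(x+y)/2$ and $g=\sqrt{xy}$. Then $$R_D(x,y,z)=\frac{3}{2z^{3/2}}\left(\ln\frac{8z}{a+g}-2+\frac{\theta}{z}\ln\frac{2z}{a+g}\right),$$ where $\frac{g}{1-g/z}<\theta<\frac{3a}{2(1-a/z)}$.
   Context: For $x,y\ge0$ not both zero and $z>0$: $R_D(x,y,z)=\frac32\int_0^\infty[(t+x)(t+y)]^{-1/2}(t+z)^{-3/2}\,dt$. *)

From Stdlib Require Import Reals.
From Coquelicot Require Import Coquelicot.
Open Scope R_scope.

Definition RD_integrand (x y z t : R) : R :=
  / sqrt ((t + x) * (t + y)) * Rpower (t + z) (- (3 / 2)).

(* Carlson's R_D(x,y,z) = 3/2 * int_0^oo integrand dt (improper at both ends: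
   at_right 0 handles the integrable t^{-1/2} singularity when x or y is 0). *)
Definition R_D (x y z : R) : R :=
  3 / 2 * RInt_gen (RD_integrand x y z) (at_right 0) (Rbar_locally p_infty).

(* Write a = (x + y) / 2, g = sqrt (x y) and sigma t = t + a + sqrt ((t + x) (t + y)), so that
   sigma' = sigma / sqrt ((t + x) (t + y)).  The identity
     2 sigma (t + z) = sigma^2 + 2 (z - a) sigma + (a - g) (a + g),
   together with 0 <= (a - g) (a + g) <= (a - g) sigma, traps t + z between (sigma + c^2) / 2 for
   c^2 = 2 z - 2 a and for c^2 = 2 z - a - g.  After this replacement the integrand of R_D has the
   elementary primitive 2 sqrt 2 K_c (sqrt (sigma + c^2)), where K_c is the primitive of
   2 / (w^2 (w^2 - c^2)) vanishing at infinity, so R_D lies between the two values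
   -3 sqrt 2 K_c (sqrt (a + g + c^2)).  With s = c / sqrt (2 z) these equal (2 z)^(-3/2) times
   2 (artanh s - s) / s^3 (for the upper value after moving a + g up to 2 a, at the price of a
   logarithmic term), and the two bounds on theta become one-variable inequalities between
   logarithms and rational functions on (0, 1), each proved by a monotonicity argument. *)

From Stdlib Require Import Reals Lra Psatz.
From Coquelicot Require Import Coquelicot.
Open Scope R_scope.

Ltac derive_side :=
  repeat split; first [apply Rgt_not_eq; nra | apply Rlt_not_eq; nra | nra].

Lemma derive_pos_lt (F dF : R -> R) u v : u < v ->
  (forall t, u <= t <= v -> is_derive F t (dF t)) ->
  (forall t, u < t < v -> 0 < dF t) -> F u < F v.
Proof.
  intros Huv HD Hpos.
  destruct (MVT_cor2 F dF u v Huv) as [c [Heq Hc]].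
  { intros t Ht. apply is_derive_Reals, HD, Ht. }
  specialize (Hpos c Hc). nra.
Qed.

Lemma derive_nonneg_le (F dF : R -> R) u v : u <= v ->
  (forall t, u <= t <= v -> is_derive F t (dF t)) ->
  (forall t, u < t < v -> 0 <= dF t) -> F u <= F v.
Proof.
  intros [Huv | ->] HD Hnn; [| lra].
  destruct (MVT_cor2 F dF u v Huv) as [c [Heq Hc]].
  { intros t Ht. apply is_derive_Reals, HD, Ht. }
  specialize (Hnn c Hc). nra.
Qed.

Lemma div_cube_decreasing (N dN : R -> R) u v : 0 < u < v ->
  (forall t, u <= t <= v -> is_derive N t (dN t)) ->
  (forall t, u < t < v -> t * dN t < 3 * N t) ->
  N v / v ^ 3 < N u / u ^ 3.
Proof.
  intros Huv HD Hlt.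
  enough (- (N u / u ^ 3) < - (N v / v ^ 3)) by lra.
  apply (derive_pos_lt (fun t => - (N t / t ^ 3))
           (fun t => (3 * N t - t * dN t) / t ^ 4)); [lra | |].
  - intros t Ht. specialize (HD t Ht).
    auto_derive.
    { repeat split; [now exists (dN t) | apply Rgt_not_eq; repeat apply Rmult_lt_0_compat; lra]. }
    replace (Derive (fun x => N x) t) with (dN t) by (symmetry; now apply is_derive_unique).
    field. lra.
  - intros t Ht. specialize (Hlt t Ht).
    apply Rdiv_lt_0_compat; [lra | apply pow_lt; lra].
Qed.

Lemma ln_le_sub_1 u : 0 < u -> ln u <= u - 1.
Proof.
  intro Hu. rewrite <- (exp_ln u) at 2 by exact Hu.
  pose proof (exp_ineq1_le (ln u)). lra.
Qed.

Lemma ln_4_mul u : 0 < u -> ln (4 * u) = 2 * ln 2 + ln u.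
Proof.
  intro Hu. replace 4 with (2 * 2) by ring. rewrite !ln_mult by lra. ring.
Qed.

Lemma ln_1_sub_sqr s : -1 < s < 1 -> ln (1 - s ^ 2) = ln (1 - s) + ln (1 + s).
Proof. intro Hs. rewrite <- ln_mult by lra. f_equal. ring. Qed.

Lemma sqrt_mul_le_mean x y : 0 <= x -> 0 <= y -> sqrt (x * y) <= (x + y) / 2.
Proof.
  intros Hx Hy. rewrite <- (sqrt_square ((x + y) / 2)) by lra.
  apply sqrt_le_1_alt. pose proof (Rle_0_sqr (x - y)). unfold Rsqr in *. nra.
Qed.

Lemma sqrt_unit_interval u : 0 < u < 1 -> 0 < sqrt u < 1.
Proof.
  intro Hu. split; [apply sqrt_lt_R0; lra |].
  rewrite <- sqrt_1. apply sqrt_lt_1_alt. lra.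
Qed.

Lemma unit_interval_1_sub_div b w : 0 < b < w -> 0 < 1 - b / w < 1.
Proof.
  intro Hb. assert (b / w * w = b) by (field; lra).
  assert (0 < b / w) by (apply Rdiv_lt_0_compat; lra). nra.
Qed.

Lemma sqrt_sub_factor w b : 0 < w -> b <= w -> sqrt (w - b) = sqrt w * sqrt (1 - b / w).
Proof.
  intros Hw Hb. replace (1 - b / w) with ((w - b) / w) by (field; lra).
  rewrite <- sqrt_mult by (try apply Rdiv_le_0_compat; lra).
  f_equal. field. lra.
Qed.

Lemma Rpower_pos u e : 0 < Rpower u e.
Proof. apply exp_pos. Qed.

Lemma Rpower_opp_antitone e u v : 0 <= e -> 0 < u <= v -> Rpower v (- e) <= Rpower u (- e).
Proof.
  intros He Huv. rewrite !Rpower_Ropp.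
  apply Rinv_le_contravar; [apply Rpower_pos | apply Rle_Rpower_l; lra].
Qed.

Lemma Rpower_3_2 u : 0 < u -> Rpower u (3 / 2) = u * sqrt u.
Proof.
  intro Hu. replace (3 / 2) with (1 + / 2) by field.
  rewrite Rpower_plus, Rpower_1, Rpower_sqrt by lra. reflexivity.
Qed.

Lemma Rpower_3_2_sqrt_pow u : 0 < u -> Rpower u (3 / 2) = sqrt u ^ 3.
Proof.
  intro Hu. rewrite Rpower_3_2 by exact Hu.
  rewrite <- (sqrt_sqrt u) at 1 by lra. ring.
Qed.

Lemma Rpower_3_2_double u : 0 < u -> Rpower (2 * u) (3 / 2) = 2 * sqrt 2 * Rpower u (3 / 2).
Proof.
  intro Hu. rewrite <- Rpower_mult_distr, (Rpower_3_2 2) by lra. reflexivity.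
Qed.

Lemma Rpower_half_sqr w : 0 < w -> Rpower (w * w / 2) (- (3 / 2)) = 2 * sqrt 2 / w ^ 3.
Proof.
  intro Hw. rewrite Rpower_Ropp, Rpower_3_2 by nra.
  rewrite sqrt_div_alt, sqrt_square by lra.
  pose proof (sqrt_lt_R0 2 ltac:(lra)).
  field. split; lra.
Qed.

Lemma Rpower_1_sub_le A : 0 <= A < 1 / 2 -> Rpower (1 - A) (- (3 / 2)) <= (1 + A) / (1 - 2 * A).
Proof.
  intro HA. rewrite Rpower_Ropp, Rpower_3_2 by lra.
  pose proof (sqrt_lt_R0 (1 - A) ltac:(lra)) as Hq.
  pose proof (sqrt_sqrt (1 - A) ltac:(lra)) as Hqq.
  set (q := sqrt (1 - A)) in *.
  (* [(1 + A)^2 (1 - A)^3 - (1 - 2 A)^2 = A (3 - 6 A) + A^3 (2 + A - A^2)] *)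
  assert (Hpoly : (1 - 2 * A) ^ 2 <= ((1 + A) * (1 - A) * q) ^ 2).
  { replace (((1 + A) * (1 - A) * q) ^ 2) with ((1 + A) ^ 2 * (1 - A) ^ 2 * (q * q)) by ring.
    rewrite Hqq.
    assert (0 <= A * (3 - 6 * A)) by (apply Rmult_le_pos; lra).
    assert (0 <= A ^ 3 * (2 + A - A * A)) by (apply Rmult_le_pos; [apply pow_le |]; nra).
    nra. }
  assert (Hle : 1 - 2 * A <= (1 + A) * (1 - A) * q).
  { apply Rsqr_incr_0_var; [unfold Rsqr; nra |]. apply Rmult_le_pos; [nra | lra]. }
  replace ((1 + A) / (1 - 2 * A)) with (/ ((1 - 2 * A) / (1 + A))) by (field; lra).
  apply Rinv_le_contravar; [apply Rdiv_lt_0_compat; lra |].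
  apply (Rmult_le_reg_r (1 + A)); [lra |].
  replace ((1 - 2 * A) / (1 + A) * (1 + A)) with (1 - 2 * A) by (field; lra).
  nra.
Qed.

Lemma Rpower_3_2_ratio_le a z : 0 < a < z ->
  Rpower (2 * z) (3 / 2) * Rpower (2 * z - a) (- (3 / 2)) <= 1 + 3 * a / (2 * (z - a)).
Proof.
  intro Haz.
  assert (HA : 0 <= a / (2 * z) < 1 / 2).
  { assert (a / (2 * z) * (2 * z) = a) by (field; lra).
    split; [apply Rdiv_le_0_compat |]; nra. }
  replace (2 * z - a) with (2 * z * (1 - a / (2 * z))) by (field; lra).
  rewrite <- (Rpower_mult_distr (2 * z) (1 - a / (2 * z))), <- Rmult_assoc, <- Rpower_plus by lra.
  replace (3 / 2 + - (3 / 2)) with 0 by ring. rewrite Rpower_O, Rmult_1_l by lra.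
  eapply Rle_trans; [apply Rpower_1_sub_le, HA |].
  right. field. lra.
Qed.

(** * Logarithmic inequalities *)

Lemma ln_1p_rational_lower s : 0 < s -> 3 * s + s ^ 2 / 2 - s ^ 4 / 3 < (3 + 2 * s) * ln (1 + s).
Proof.
  intro Hs.
  enough ((3 * s + s ^ 2 / 2 - s ^ 4 / 3) / (3 + 2 * s) < ln (1 + s)).
  { apply (Rmult_lt_compat_l (3 + 2 * s)) in H; [| lra].
    replace ((3 + 2 * s) * ((3 * s + s ^ 2 / 2 - s ^ 4 / 3) / (3 + 2 * s)))
      with (3 * s + s ^ 2 / 2 - s ^ 4 / 3) in H by (field; lra).
    exact H. }
  pose (F t := ln (1 + t) - (3 * t + t ^ 2 / 2 - t ^ 4 / 3) / (3 + 2 * t)).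
  enough (F 0 < F s) by (unfold F in H; rewrite Rplus_0_r, ln_1 in H; lra).
  apply (derive_pos_lt F (fun t => t ^ 3 * (3 + 6 * t + 2 * t ^ 2) / ((1 + t) * (3 + 2 * t) ^ 2))).
  - exact Hs.
  - intros t Ht. unfold F. auto_derive; [derive_side |]. field. lra.
  - intros t Ht. apply Rdiv_lt_0_compat.
    + apply Rmult_lt_0_compat; [apply pow_lt |]; nra.
    + apply Rmult_lt_0_compat; [| apply pow_lt]; lra.
Qed.

Lemma ln_1p_rational_upper r : 0 < r -> 12 * ln (1 + r) < 12 * r - (6 * r ^ 2 + 8 * r ^ 3) / (1 + r) ^ 2.
Proof.
  intro Hr.
  pose (F t := 12 * t - (6 * t ^ 2 + 8 * t ^ 3) / (1 + t) ^ 2 - 12 * ln (1 + t)).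
  enough (F 0 < F r) by (unfold F in H; rewrite Rplus_0_r, ln_1 in H; lra).
  apply (derive_pos_lt F (fun t => 4 * t ^ 3 / (1 + t) ^ 3)); [exact Hr | |].
  - intros t Ht. unfold F. auto_derive; [derive_side |]. field. lra.
  - intros t Ht. apply Rdiv_lt_0_compat; [| apply pow_lt; lra].
    pose proof (pow_lt t 3 ltac:(lra)). lra.
Qed.

Lemma opp_ln_1m_taylor_lower s : 0 <= s < 1 -> s + s ^ 2 / 2 + s ^ 3 / 3 <= - ln (1 - s).
Proof.
  intro Hs.
  pose (F t := - ln (1 - t) - t - t ^ 2 / 2 - t ^ 3 / 3).
  enough (F 0 <= F s) by (unfold F in H; replace (1 - 0) with 1 in H by ring; rewrite ln_1 in H; lra).
  apply (derive_nonneg_le F (fun t => t ^ 3 / (1 - t))); [lra | |].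
  - intros t Ht. unfold F. auto_derive; [derive_side |]. field. lra.
  - intros t Ht. apply Rdiv_le_0_compat; [apply pow_le |]; lra.
Qed.

Lemma ln_1p_cubic_lower s : 0 < s < 1 ->
  (2 * ln 2 - 2) * s ^ 3 < (1 + s) * ln (1 + s) - s - s ^ 2 / 2 - s ^ 3 / 6 - s ^ 4 / 3.
Proof.
  intro Hs.
  pose (N t := (1 + t) * ln (1 + t) - t - t ^ 2 / 2 - t ^ 3 / 6 - t ^ 4 / 3).
  assert (Hdec : N 1 / 1 ^ 3 < N s / s ^ 3).
  { apply (div_cube_decreasing N (fun t => ln (1 + t) - t - t ^ 2 / 2 - 4 * t ^ 3 / 3)); [lra | |].
    - intros t Ht. unfold N. auto_derive; [derive_side |]. field. lra.
    - intros t Ht. pose proof (ln_1p_rational_lower t ltac:(lra)). unfold N. nra. }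
  replace (N 1 / 1 ^ 3) with (2 * ln 2 - 2) in Hdec
    by (unfold N; replace (1 + 1) with 2 by ring; field).
  apply (Rmult_lt_compat_r (s ^ 3)) in Hdec; [| apply pow_lt; lra].
  replace (N s / s ^ 3 * s ^ 3) with (N s) in Hdec by (field; lra).
  exact Hdec.
Qed.

Lemma ln_1p_cubic_upper r : 0 < r < 1 ->
  (4 - 4 * ln 2) * r ^ 3 < 4 * r - 4 * ln (1 + r) - (1 - r) * (2 + r) * r ^ 2 / (1 + r).
Proof.
  intro Hr.
  pose (N t := 4 * t - 4 * ln (1 + t) - (1 - t) * (2 + t) * t ^ 2 / (1 + t)).
  assert (Hdec : N 1 / 1 ^ 3 < N r / r ^ 3).
  { apply (div_cube_decreasing N
             (fun t => t ^ 2 * (5 + 6 * t + 3 * t ^ 2) / (1 + t) ^ 2)); [lra | |].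
    - intros t Ht. unfold N. auto_derive; [derive_side |]. field. lra.
    - intros t Ht. pose proof (ln_1p_rational_upper t ltac:(lra)).
      enough (3 * N t - t * (t ^ 2 * (5 + 6 * t + 3 * t ^ 2) / (1 + t) ^ 2) =
              12 * t - (6 * t ^ 2 + 8 * t ^ 3) / (1 + t) ^ 2 - 12 * ln (1 + t)) by lra.
      unfold N. field. lra. }
  replace (N 1 / 1 ^ 3) with (4 - 4 * ln 2) in Hdec
    by (unfold N; replace (1 + 1) with 2 by ring; field).
  apply (Rmult_lt_compat_r (r ^ 3)) in Hdec; [| apply pow_lt; lra].
  replace (N r / r ^ 3 * r ^ 3) with (N r) in Hdec by (field; lra).
  exact Hdec.
Qed.

(* [phi s = 2 (artanh s - s) / s^3]. *)
Definition phi (s : R) : R := (ln (1 + s) - ln (1 - s)) / s ^ 3 - 2 / s ^ 2.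

Lemma phi_gt s : 0 < s < 1 -> 2 * ln 2 - 2 - ln (1 - s ^ 2) / s ^ 2 < phi s.
Proof.
  intro Hs. unfold phi. rewrite ln_1_sub_sqr by lra.
  (* Replacing [- ln (1 - s)] by its Taylor polynomial keeps the comparison at [s = 1] away from
     the singularity of [ln (1 - s)]. *)
  pose proof (opp_ln_1m_taylor_lower s ltac:(lra)) as Hal.
  pose proof (ln_1p_cubic_lower s Hs) as Hbe.
  set (al := ln (1 - s)) in *. set (be := ln (1 + s)) in *.
  set (num := (1 + s) * be - (1 - s) * al - 2 * s + (2 - 2 * ln 2) * s ^ 3).
  assert (Hnum : 0 < num / s ^ 3).
  { apply Rdiv_lt_0_compat; [| apply pow_lt; lra].
    assert ((1 - s) * (s + s ^ 2 / 2 + s ^ 3 / 3) <= (1 - s) * - al)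
      by (apply Rmult_le_compat_l; lra).
    unfold num. lra. }
  enough ((be - al) / s ^ 3 - 2 / s ^ 2 - (2 * ln 2 - 2 - (al + be) / s ^ 2) = num / s ^ 3)
    by lra.
  unfold num. field. lra.
Qed.

Lemma phi_lt r : 0 < r < 1 ->
  phi r < 2 * ln 2 - 2 + (1 + 3 * (1 - r ^ 2) / (2 * r ^ 2)) * - ln (1 - r ^ 2).
Proof.
  intro Hr.
  assert (HL : - ln (1 - r ^ 2) <= r ^ 2 / (1 - r ^ 2)).
  { rewrite <- ln_Rinv by nra.
    replace (r ^ 2 / (1 - r ^ 2)) with (/ (1 - r ^ 2) - 1) by (field; nra).
    apply ln_le_sub_1, Rinv_0_lt_compat. nra. }
  unfold phi. rewrite ln_1_sub_sqr in * by lra.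
  pose proof (ln_1p_cubic_upper r Hr) as Hbe.
  set (al := ln (1 - r)) in *. set (be := ln (1 + r)) in *.
  set (num := (4 * ln 2 - 4) * r ^ 3 + 4 * r - 4 * be - (1 - r) ^ 2 * (2 + r) * - (al + be)).
  assert (Hnum : 0 < num / (2 * r ^ 3)).
  { apply Rdiv_lt_0_compat; [| pose proof (pow_lt r 3); lra].
    assert (H1 : (1 - r) ^ 2 * (2 + r) * - (al + be) <= (1 - r) ^ 2 * (2 + r) * (r ^ 2 / (1 - r ^ 2)))
      by (apply Rmult_le_compat_l; [apply Rmult_le_pos; [apply pow_le |] |]; lra).
    replace ((1 - r) ^ 2 * (2 + r) * (r ^ 2 / (1 - r ^ 2)))
      with ((1 - r) * (2 + r) * r ^ 2 / (1 + r)) in H1 by (field; derive_side).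
    unfold num. lra. }
  enough (2 * ln 2 - 2 + (1 + 3 * (1 - r ^ 2) / (2 * r ^ 2)) * - (al + be)
          - ((be - al) / r ^ 3 - 2 / r ^ 2) = num / (2 * r ^ 3)) by lra.
  unfold num. field. lra.
Qed.

(** * An elementary primitive *)

(* The primitive of [w |-> 2 / (w^2 (w^2 - c^2))] on [(c, +oo)] that vanishes at [+oo]. *)
Definition prim (c w : R) : R := 2 / (c * c) * (ln ((w - c) / (w + c)) / (2 * c) + / w).

Lemma prim_derive c w : 0 < c < w -> is_derive (prim c) w (2 / (w * w * (w * w - c * c))).
Proof.
  intro H. unfold prim.
  auto_derive; [repeat split; try derive_side; apply Rdiv_lt_0_compat; lra |].
  field. derive_side.
Qed.

Lemma prim_increasing c w1 w2 : 0 < c < w1 -> w1 < w2 -> prim c w1 < prim c w2.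
Proof.
  intros Hw1 Hw2.
  apply (derive_pos_lt _ (fun w => 2 / (w * w * (w * w - c * c))) w1 w2 Hw2).
  - intros w Hw. apply prim_derive. lra.
  - intros w Hw. apply Rdiv_lt_0_compat; [lra |].
    apply Rmult_lt_0_compat; nra.
Qed.

Lemma is_lim_prim c : 0 < c -> is_lim (prim c) p_infty 0.
Proof.
  intro Hc.
  assert (Hinv : forall d, is_lim (fun w => / (w + d)) p_infty 0).
  { intro d. change (Finite 0) with (Rbar_inv p_infty).
    apply is_lim_inv; [| discriminate].
    eapply is_lim_plus; [apply is_lim_id | apply is_lim_const | reflexivity]. }
  assert (Hq : is_lim (fun w => (w - c) / (w + c)) p_infty 1).
  { apply is_lim_ext_loc with (fun w => 1 - 2 * c * / (w + c)).
    { exists c. intros w Hw. field. lra. }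
    replace (Finite 1) with (Finite (1 - 2 * c * 0)) by (f_equal; ring).
    apply is_lim_minus'; [apply is_lim_const |].
    pose proof (is_lim_scal_l _ (2 * c) _ _ (Hinv c)) as H. exact H. }
  assert (Hln : is_lim (fun w => ln ((w - c) / (w + c))) p_infty 0).
  { rewrite <- ln_1. apply is_lim_comp_continuous; [exact Hq | apply continuous_ln; lra]. }
  pose proof (is_lim_plus' _ _ _ _ _ (is_lim_scal_l _ (/ (2 * c)) _ _ Hln) (Hinv 0)) as H.
  pose proof (is_lim_scal_l _ (2 / (c * c)) _ _ H) as H'. simpl in H'.
  replace (2 / (c * c) * (/ (2 * c) * 0 + 0)) with 0 in H' by ring.
  revert H'. apply is_lim_ext. intro w. unfold prim. rewrite Rplus_0_r. unfold Rdiv. ring.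
Qed.

Lemma prim_neg c w : 0 < c < w -> prim c w < 0.
Proof.
  intro Hw.
  enough (Rbar_le (prim c (w + 1)) 0).
  { pose proof (prim_increasing c w (w + 1) Hw ltac:(lra)). simpl in H. lra. }
  apply (is_lim_le_loc (fun _ => prim c (w + 1)) (prim c) p_infty);
    [| apply is_lim_const | apply is_lim_prim; lra].
  exists (w + 1). intros v Hv. left. apply prim_increasing; lra.
Qed.

Lemma prim_scale w s : 0 < w -> 0 < s < 1 -> w ^ 3 * prim (w * s) w = - phi s.
Proof.
  intros Hw Hs. unfold prim, phi.
  replace ((w - w * s) / (w + w * s)) with ((1 - s) / (1 + s)) by (field; derive_side).
  rewrite ln_div by lra. field. derive_side.
Qed.

Lemma phi_prim_sqrt z b : 0 < b < 2 * z ->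
  - Rpower (2 * z) (3 / 2) * prim (sqrt (2 * z - b)) (sqrt (2 * z)) = phi (sqrt (1 - b / (2 * z))).
Proof.
  intro Hb. pose proof (unit_interval_1_sub_div b (2 * z) Hb).
  rewrite sqrt_sub_factor, Rpower_3_2_sqrt_pow by lra.
  rewrite Ropp_mult_distr_l_reverse, prim_scale, Ropp_involutive; [reflexivity | |].
  - apply sqrt_lt_R0. lra.
  - now apply sqrt_unit_interval.
Qed.

Lemma prim_sqrt_increment_le c a0 q1 q2 : 0 < c -> 0 < a0 <= q1 -> q1 <= q2 ->
  prim c (sqrt (q2 + c * c)) - prim c (sqrt (q1 + c * c)) <=
  Rpower (a0 + c * c) (- (3 / 2)) * (ln q2 - ln q1).
Proof.
  intros Hc Hq1 Hq12.
  set (M := Rpower (a0 + c * c) (- (3 / 2))).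
  enough (M * ln q1 - prim c (sqrt (q1 + c * c)) <= M * ln q2 - prim c (sqrt (q2 + c * c)))
    by lra.
  apply (derive_nonneg_le (fun q => M * ln q - prim c (sqrt (q + c * c)))
           (fun q => (M - Rpower (q + c * c) (- (3 / 2))) / q)); [lra | |].
  - intros q Hq.
    assert (Hw : 0 < sqrt (q + c * c)) by (apply sqrt_lt_R0; nra).
    assert (Hww : sqrt (q + c * c) * sqrt (q + c * c) = q + c * c) by (apply sqrt_sqrt; nra).
    assert (Hcw : c < sqrt (q + c * c)) by nra.
    pose proof (prim_derive c _ (conj Hc Hcw)) as Hd.
    auto_derive; [repeat split; [lra | exists (2 / (sqrt (q + c * c) * sqrt (q + c * c) *
      (sqrt (q + c * c) * sqrt (q + c * c) - c * c))); exact Hd | nra] |].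
    replace (Derive (fun x => prim c x) (sqrt (q + c * c))) with
      (2 / (sqrt (q + c * c) * sqrt (q + c * c) * (sqrt (q + c * c) * sqrt (q + c * c) - c * c)))
      by (symmetry; now apply is_derive_unique).
    rewrite Rpower_Ropp, Rpower_3_2 by nra.
    set (w := sqrt (q + c * c)) in *. clearbody w.
    replace q with (w * w - c * c) by lra.
    field. repeat split; nra.
  - intros q Hq. apply Rdiv_le_0_compat; [| lra].
    enough (Rpower (q + c * c) (- (3 / 2)) <= M) by lra.
    apply Rpower_opp_antitone; nra.
Qed.

(** * Improper integrals over (0, +oo) *)

Lemma filter_prod_0_infty :
  filter_prod (at_right 0) (Rbar_locally p_infty) (fun ab => 0 < fst ab < 1 /\ 1 < snd ab).
Proof.
  apply Filter_prod with (fun a => 0 < a < 1) (fun b => 1 < b).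
  - exists (mkposreal 1 Rlt_0_1). intros a Ha Ha0.
    change (Rabs (a - 0) < 1) in Ha. apply Rabs_def2 in Ha. lra.
  - exists 1. tauto.
  - tauto.
Qed.

Lemma filter_prod_0_infty_interval (P : R -> Prop) : (forall t, 0 < t -> P t) ->
  filter_prod (at_right 0) (Rbar_locally p_infty)
    (fun ab => forall t, Rmin (fst ab) (snd ab) <= t <= Rmax (fst ab) (snd ab) -> P t).
Proof.
  intro HP. eapply filter_imp; [| exact filter_prod_0_infty].
  intros [a b] [Ha Hb] t Ht. simpl in *. apply HP.
  rewrite Rmin_left in Ht by lra. lra.
Qed.

Section ImproperIntegral.

Variable f : R -> R.
Hypothesis f_cont : forall t, 0 < t -> continuous f t.
Hypothesis f_nonneg : forall t, 0 < t -> 0 <= f t.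

Lemma ex_RInt_pos u v : 0 < u <= v -> ex_RInt f u v.
Proof.
  intro Huv. apply (ex_RInt_continuous (V := R_CompleteNormedModule)).
  intros t Ht. rewrite Rmin_left in Ht by lra. apply f_cont. lra.
Qed.

Lemma RInt_pos_mono u v u' v' : 0 < u' <= u -> u <= v -> v <= v' -> RInt f u v <= RInt f u' v'.
Proof.
  intros Hu Huv Hv.
  rewrite <- (RInt_Chasles f u' u v') by (apply ex_RInt_pos; lra).
  rewrite <- (RInt_Chasles f u v v') by (apply ex_RInt_pos; lra).
  assert (0 <= RInt f u' u) by (apply RInt_ge_0; [lra | apply ex_RInt_pos; lra | intros; apply f_nonneg; lra]).
  assert (0 <= RInt f v v') by (apply RInt_ge_0; [lra | apply ex_RInt_pos; lra | intros; apply f_nonneg; lra]).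
  unfold plus; simpl. lra.
Qed.

(* The improper integral is the supremum of the integrals over the compact subintervals. *)
Lemma is_RInt_gen_pos_bounded (B : R) : (forall u v, 0 < u <= v -> RInt f u v <= B) ->
  exists l, is_RInt_gen f (at_right 0) (Rbar_locally p_infty) l.
Proof.
  intro HB.
  pose (E r := exists u v, 0 < u <= v /\ r = RInt f u v).
  destruct (completeness E) as [l [Hub Hlub]].
  { exists B. intros r [u [v [Huv ->]]]. now apply HB. }
  { exists (RInt f 1 1), 1, 1. split; [lra | reflexivity]. }
  exists l. intros P [eps Heps].
  assert (Happrox : exists u0 v0, 0 < u0 <= v0 /\ l - eps < RInt f u0 v0).
  { apply Classical_Prop.NNPP. intro Hno.
    enough (l <= l - eps) by (pose proof (cond_pos eps); lra).
    apply Hlub. intros r [u [v [Huv ->]]].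
    apply Rnot_lt_le. intro Hlt. apply Hno. now exists u, v. }
  destruct Happrox as [u0 [v0 [Huv0 Hlt]]].
  apply Filter_prod with (fun u => 0 < u < u0) (fun v => v0 < v).
  - exists (mkposreal u0 (proj1 Huv0)). intros u Hu Hu0.
    change (Rabs (u - 0) < u0) in Hu. apply Rabs_def2 in Hu. simpl. lra.
  - now exists v0.
  - intros u v Hu Hv. exists (RInt f u v). split.
    + apply (RInt_correct (V := R_CompleteNormedModule)), ex_RInt_pos. simpl. lra.
    + apply Heps. change (Rabs (RInt f u v - l) < eps).
      assert (RInt f u v <= l) by (apply Hub; exists u, v; split; [lra | reflexivity]).
      assert (RInt f u0 v0 <= RInt f u v) by (apply RInt_pos_mono; simpl; lra).
      apply Rabs_def1; lra.
Qed.

End ImproperIntegral.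

(** * Comparison integrands *)

Definition rad (x y t : R) : R := sqrt ((t + x) * (t + y)).

(* [2 sigma = (sqrt (t + x) + sqrt (t + y))^2] *)
Definition sigma (x y t : R) : R := t + (x + y) / 2 + rad x y t.

Section Substitution.

Variables x y : R.
Hypotheses (Hx : 0 <= x) (Hy : 0 <= y).

Lemma rad_pos t : 0 < t -> 0 < rad x y t.
Proof. intro Ht. apply sqrt_lt_R0. nra. Qed.

Lemma rad_sqr t : 0 <= t -> rad x y t * rad x y t = (t + x) * (t + y).
Proof. intro Ht. apply sqrt_sqrt. nra. Qed.

Lemma sigma_0 : sigma x y 0 = (x + y) / 2 + sqrt (x * y).
Proof. unfold sigma, rad. rewrite !Rplus_0_l. ring. Qed.

Lemma sigma_ge t : 0 <= t -> (x + y) / 2 + sqrt (x * y) + t <= sigma x y t.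
Proof.
  intro Ht. unfold sigma, rad.
  enough (sqrt (x * y) <= sqrt ((t + x) * (t + y))) by lra.
  apply sqrt_le_1_alt. nra.
Qed.

Lemma sigma_derive t : 0 < t -> is_derive (sigma x y) t (sigma x y t / rad x y t).
Proof.
  intro Ht. pose proof (rad_pos t Ht). unfold sigma, rad in *.
  auto_derive; [nra |]. field. lra.
Qed.

Lemma shift_bounds z t : 0 < t ->
  (sigma x y t + 2 * z - 2 * ((x + y) / 2)) / 2 <= t + z <=
  (sigma x y t + 2 * z - ((x + y) / 2 + sqrt (x * y))) / 2.
Proof.
  intro Ht.
  pose proof (sigma_ge t (Rlt_le _ _ Ht)) as Hs. pose proof (rad_sqr t (Rlt_le _ _ Ht)) as Hr.
  pose proof (sqrt_mul_le_mean x y Hx Hy) as Hga.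
  assert (Hg : sqrt (x * y) * sqrt (x * y) = x * y) by (apply sqrt_sqrt; nra).
  pose proof (sqrt_pos (x * y)).
  assert (E : 2 * sigma x y t * (t + z) = sigma x y t * sigma x y t
     + 2 * (z - (x + y) / 2) * sigma x y t
     + ((x + y) / 2 - sqrt (x * y)) * ((x + y) / 2 + sqrt (x * y))).
  { unfold sigma in *. nra. }
  set (s := sigma x y t) in *. set (g := sqrt (x * y)) in *. set (a := (x + y) / 2) in *.
  assert (0 <= (a - g) * (a + g)) by (apply Rmult_le_pos; lra).
  assert ((a - g) * (a + g) <= (a - g) * s) by (apply Rmult_le_compat_l; lra).
  split; apply (Rmult_le_reg_l (2 * s)); lra.
Qed.

End Substitution.

(* [R_D]'s integrand with [t + z] replaced by [(sigma + c^2) / 2]; [cmp_prim] is a primitive. *)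
Definition cmp_integrand (x y c t : R) : R :=
  / rad x y t * Rpower ((sigma x y t + c * c) / 2) (- (3 / 2)).

Definition cmp_prim (x y c t : R) : R := 2 * sqrt 2 * prim c (sqrt (sigma x y t + c * c)).

Section Comparison.

Variables x y c : R.
Hypotheses (Hx : 0 <= x) (Hy : 0 <= y) (Hxy : 0 < x + y) (Hc : 0 < c).

Lemma sigma_pos t : 0 <= t -> 0 < sigma x y t.
Proof.
  intro Ht. pose proof (sigma_ge x y Hx Hy t Ht). pose proof (sqrt_pos (x * y)). lra.
Qed.

Lemma c_lt_sqrt_sigma t : 0 <= t -> c < sqrt (sigma x y t + c * c).
Proof.
  intro Ht. rewrite <- (sqrt_square c) at 1 by lra.
  apply sqrt_lt_1_alt. pose proof (sigma_pos t Ht). nra.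
Qed.

Lemma cmp_prim_derive t : 0 < t -> is_derive (cmp_prim x y c) t (cmp_integrand x y c t).
Proof.
  intro Ht.
  pose proof (sigma_pos t (Rlt_le _ _ Ht)) as Hs. pose proof (rad_pos x y Hx Hy t Ht) as Hr.
  pose proof (c_lt_sqrt_sigma t (Rlt_le _ _ Ht)) as Hcw.
  set (w := sqrt (sigma x y t + c * c)) in *.
  assert (Hww : w * w = sigma x y t + c * c) by (apply sqrt_sqrt; nra).
  assert (Hw : is_derive (fun t => sqrt (sigma x y t + c * c)) t
                 (sigma x y t / rad x y t / (2 * w))).
  { pose proof (sigma_derive x y Hx Hy t Ht) as Hd.
    auto_derive; [split; [now exists (sigma x y t / rad x y t) | split; [nra | exact I]] |].
    replace (Derive (fun x0 => sigma x y x0) t) with (sigma x y t / rad x y t)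
      by (symmetry; now apply is_derive_unique).
    fold w. field. lra. }
  unfold cmp_prim, cmp_integrand. rewrite <- Hww, Rpower_half_sqr by lra.
  replace (/ rad x y t * (2 * sqrt 2 / w ^ 3)) with
    (scal (2 * sqrt 2) (scal (sigma x y t / rad x y t / (2 * w)) (2 / (w * w * (w * w - c * c))))).
  - apply is_derive_scal, (is_derive_comp (prim c)); [apply prim_derive; lra | exact Hw].
  - unfold scal; simpl; unfold mult; simpl. clearbody w.
    replace (sigma x y t) with (w * w - c * c) by lra. field. derive_side.
Qed.

Lemma cmp_integrand_continuous t : 0 < t -> continuous (cmp_integrand x y c) t.
Proof.
  intro Ht. apply (ex_derive_continuous (V := R_NormedModule)).
  pose proof (sigma_pos t (Rlt_le _ _ Ht)) as Hs. pose proof (rad_pos x y Hx Hy t Ht) as Hr.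
  unfold cmp_integrand, sigma, rad, Rpower in *. auto_derive. derive_side.
Qed.

Lemma cmp_prim_continuous_0 : continuous (cmp_prim x y c) 0.
Proof.
  assert (Htranslate : forall d, continuous (fun t : R => t + d) 0).
  { intro d. apply (continuous_plus (fun t => t) (fun _ => d));
      [apply continuous_id | apply continuous_const]. }
  assert (Hsigma : continuous (fun t => sigma x y t + c * c) 0).
  { unfold sigma, rad.
    apply (continuous_plus (fun t => t + (x + y) / 2 + sqrt ((t + x) * (t + y))) (fun _ => c * c));
      [| apply continuous_const].
    apply (continuous_plus (fun t => t + (x + y) / 2) (fun t => sqrt ((t + x) * (t + y))));
      [apply Htranslate |].
    apply continuous_sqrt_comp, (continuous_mult (fun t => t + x) (fun t => t + y)); apply Htranslate. }
  unfold cmp_prim.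
  apply (continuous_mult (fun _ => 2 * sqrt 2) (fun t => prim c (sqrt (sigma x y t + c * c))));
    [apply continuous_const |].
  apply (continuous_comp (fun t => sqrt (sigma x y t + c * c)) (prim c));
    [now apply continuous_sqrt_comp |].
  apply (ex_derive_continuous (V := R_NormedModule)).
  eexists. apply prim_derive. split; [lra | apply c_lt_sqrt_sigma; lra].
Qed.

Lemma is_lim_cmp_prim : is_lim (cmp_prim x y c) p_infty 0.
Proof.
  assert (Hw : is_lim (fun t => sqrt (sigma x y t + c * c)) p_infty p_infty).
  { apply is_lim_sqrt_p, (is_lim_le_p_loc (fun t => t)); [| apply is_lim_id].
    exists 0. intros t Ht. pose proof (sigma_ge x y Hx Hy t (Rlt_le _ _ Ht)).
    pose proof (sqrt_pos (x * y)). nra. }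
  replace (Finite 0) with (Rbar_mult (2 * sqrt 2) 0) by (simpl; f_equal; ring).
  apply is_lim_scal_l, (is_lim_comp (prim c) _ _ _ p_infty); [apply is_lim_prim; lra | exact Hw |].
  exists 0. intros t _. discriminate.
Qed.

Lemma is_RInt_gen_cmp_integrand :
  is_RInt_gen (cmp_integrand x y c) (at_right 0) (Rbar_locally p_infty) (- cmp_prim x y c 0).
Proof.
  apply (is_RInt_gen_ext (Derive (cmp_prim x y c))).
  { eapply filter_imp; [| apply (filter_prod_0_infty_interval
                                   (fun t => Derive (cmp_prim x y c) t = cmp_integrand x y c t))].
    - intros ab H t Ht. apply H. lra.
    - intros t Ht. now apply is_derive_unique, cmp_prim_derive. }
  replace (- cmp_prim x y c 0) with (0 - cmp_prim x y c 0) by ring.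
  apply is_RInt_gen_Derive.
  - apply filter_prod_0_infty_interval. intros t Ht. eexists. now apply cmp_prim_derive.
  - apply filter_prod_0_infty_interval. intros t Ht.
    apply (continuous_ext_loc _ (cmp_integrand x y c)); [| now apply cmp_integrand_continuous].
    exists (mkposreal t Ht). intros u Hu. change (Rabs (u - t) < t) in Hu.
    apply Rabs_def2 in Hu. symmetry. apply is_derive_unique, cmp_prim_derive. lra.
  - apply (filterlim_filter_le_1 (F := locally 0)); [apply filter_le_within |].
    apply cmp_prim_continuous_0.
  - apply is_lim_cmp_prim.
Qed.

Lemma RInt_cmp_integrand u v : 0 < u <= v ->
  RInt (cmp_integrand x y c) u v = cmp_prim x y c v - cmp_prim x y c u.
Proof.
  intro Huv. apply is_RInt_unique, (is_RInt_derive (V := R_CompleteNormedModule));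
    intros t Ht; rewrite Rmin_left in Ht by lra.
  - apply cmp_prim_derive. lra.
  - apply cmp_integrand_continuous. lra.
Qed.

Lemma cmp_prim_neg t : 0 <= t -> cmp_prim x y c t < 0.
Proof.
  intro Ht. unfold cmp_prim.
  pose proof (sqrt_lt_R0 2 ltac:(lra)).
  pose proof (prim_neg c _ (conj Hc (c_lt_sqrt_sigma t Ht))). nra.
Qed.

Lemma cmp_prim_0_le t : 0 <= t -> cmp_prim x y c 0 <= cmp_prim x y c t.
Proof.
  intro Ht. unfold cmp_prim.
  pose proof (sqrt_lt_R0 2 ltac:(lra)).
  apply Rmult_le_compat_l; [lra |].
  assert (Hle : sqrt (sigma x y 0 + c * c) <= sqrt (sigma x y t + c * c)).
  { apply sqrt_le_1_alt. rewrite sigma_0.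
    pose proof (sigma_ge x y Hx Hy t Ht). lra. }
  destruct Hle as [Hlt | ->]; [| lra].
  left. apply prim_increasing; [split; [lra | apply c_lt_sqrt_sigma; lra] | exact Hlt].
Qed.

End Comparison.

Section Bounds.

Variables x y z : R.
Hypotheses (Hx : 0 <= x) (Hy : 0 <= y) (Hxy : 0 < x + y) (Hz : 0 < z).

Lemma RD_integrand_continuous t : 0 < t -> continuous (RD_integrand x y z) t.
Proof.
  intro Ht. apply (ex_derive_continuous (V := R_NormedModule)).
  assert (0 < sqrt ((t + x) * (t + y))) by (apply sqrt_lt_R0; nra).
  unfold RD_integrand, Rpower. auto_derive. derive_side.
Qed.

Lemma RD_integrand_nonneg t : 0 < t -> 0 <= RD_integrand x y z t.
Proof.
  intro Ht. left. apply Rmult_lt_0_compat; [| apply Rpower_pos].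
  apply Rinv_0_lt_compat, (rad_pos x y Hx Hy t Ht).
Qed.

Lemma RD_integrand_le_cmp c t : c * c <= 2 * z - 2 * ((x + y) / 2) -> 0 < t ->
  RD_integrand x y z t <= cmp_integrand x y c t.
Proof.
  intros Hcz Ht. pose proof (shift_bounds x y Hx Hy z t Ht).
  pose proof (sigma_pos x y Hx Hy Hxy t (Rlt_le _ _ Ht)).
  apply Rmult_le_compat_l; [left; apply Rinv_0_lt_compat, (rad_pos x y Hx Hy t Ht) |].
  apply Rpower_opp_antitone; nra.
Qed.

Lemma cmp_le_RD_integrand c t : 2 * z - ((x + y) / 2 + sqrt (x * y)) <= c * c -> 0 < t ->
  cmp_integrand x y c t <= RD_integrand x y z t.
Proof.
  intros Hcz Ht. pose proof (shift_bounds x y Hx Hy z t Ht).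
  apply Rmult_le_compat_l; [left; apply Rinv_0_lt_compat, (rad_pos x y Hx Hy t Ht) |].
  apply Rpower_opp_antitone; lra.
Qed.

Lemma RInt_gen_RD_integrand_bounds c1 c2 : 0 < c1 -> 0 < c2 ->
  2 * z - ((x + y) / 2 + sqrt (x * y)) <= c1 * c1 -> c2 * c2 <= 2 * z - 2 * ((x + y) / 2) ->
  - cmp_prim x y c1 0 <= RInt_gen (RD_integrand x y z) (at_right 0) (Rbar_locally p_infty)
  <= - cmp_prim x y c2 0.
Proof.
  intros Hc1 Hc2 Hlo Hhi.
  destruct (is_RInt_gen_pos_bounded (RD_integrand x y z)
              RD_integrand_continuous RD_integrand_nonneg (- cmp_prim x y c2 0)) as [l Hl].
  { intros u v Huv.
    apply Rle_trans with (RInt (cmp_integrand x y c2) u v).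
    - apply RInt_le; [lra | apply ex_RInt_pos; [apply RD_integrand_continuous | lra] | |].
      + apply (ex_RInt_continuous (V := R_CompleteNormedModule)). intros t Ht.
        rewrite Rmin_left in Ht by lra. apply cmp_integrand_continuous; lra.
      + intros t Ht. apply RD_integrand_le_cmp; lra.
    - rewrite RInt_cmp_integrand by lra.
      pose proof (cmp_prim_neg x y c2 Hx Hy Hxy Hc2 v ltac:(lra)).
      pose proof (cmp_prim_0_le x y c2 Hx Hy Hxy Hc2 u ltac:(lra)). lra. }
  rewrite (is_RInt_gen_unique _ _ Hl).
  assert (Hab : filter_prod (at_right 0) (Rbar_locally p_infty) (fun ab => fst ab <= snd ab)).
  { eapply filter_imp; [| exact filter_prod_0_infty]. intros ab H. lra. }
  split.
  - enough (Rabs (- cmp_prim x y c1 0) <= l) by (pose proof (Rle_abs (- cmp_prim x y c1 0)); lra).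
    apply (RInt_gen_norm (V := R_CompleteNormedModule) (cmp_integrand x y c1) (RD_integrand x y z)
             _ _ Hab); [| apply is_RInt_gen_cmp_integrand; lra | exact Hl].
    eapply filter_imp; [| exact filter_prod_0_infty]. intros [a b] [Ha Hb] t Ht. simpl in *.
    change (Rabs (cmp_integrand x y c1 t) <= RD_integrand x y z t).
    rewrite Rabs_pos_eq; [apply cmp_le_RD_integrand; lra |].
    left. apply Rmult_lt_0_compat; [| apply Rpower_pos].
    apply Rinv_0_lt_compat, rad_pos; lra.
  - enough (Rabs l <= - cmp_prim x y c2 0) by (pose proof (Rle_abs l); lra).
    apply (RInt_gen_norm (V := R_CompleteNormedModule) (RD_integrand x y z) (cmp_integrand x y c2)
             _ _ Hab); [| exact Hl | apply is_RInt_gen_cmp_integrand; lra].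
    eapply filter_imp; [| exact filter_prod_0_infty]. intros [a b] [Ha Hb] t Ht. simpl in *.
    change (Rabs (RD_integrand x y z t) <= cmp_integrand x y c2 t).
    rewrite Rabs_pos_eq by (apply RD_integrand_nonneg; lra).
    apply RD_integrand_le_cmp; lra.
Qed.

End Bounds.

(** * Bounds for theta *)

Section Estimates.

Variables a g z : R.
Hypotheses (Hga : 0 <= g <= a) (Haz : 0 < a < z).

Lemma ln_ratio_pos : 0 < ln (2 * z / (a + g)).
Proof.
  rewrite <- ln_1. apply ln_increasing; [lra |].
  assert (2 * z / (a + g) * (a + g) = 2 * z) by (field; lra). nra.
Qed.

Lemma ln_8_ratio : ln (8 * z / (a + g)) = 2 * ln 2 + ln (2 * z / (a + g)).
Proof.
  replace (8 * z / (a + g)) with (4 * (2 * z / (a + g))) by (field; lra).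
  apply ln_4_mul, Rdiv_lt_0_compat; lra.
Qed.

Lemma theta_lower_estimate :
  ln (8 * z / (a + g)) - 2 + g / (z - g) * ln (2 * z / (a + g)) <
  - Rpower (2 * z) (3 / 2) * prim (sqrt (2 * z - (a + g))) (sqrt (2 * z)).
Proof.
  pose proof ln_ratio_pos as HL.
  pose proof (unit_interval_1_sub_div (a + g) (2 * z) ltac:(lra)) as Hu.
  rewrite phi_prim_sqrt, ln_8_ratio by lra.
  set (L := ln (2 * z / (a + g))) in *. set (s := sqrt (1 - (a + g) / (2 * z))).
  assert (Hs2 : s ^ 2 = 1 - (a + g) / (2 * z)) by (apply pow2_sqrt; lra).
  eapply Rle_lt_trans; [| apply phi_gt, sqrt_unit_interval, Hu].
  fold s. replace (ln (1 - s ^ 2)) with (- L).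
  2:{ rewrite Hs2. unfold L. rewrite <- ln_Rinv by (apply Rdiv_lt_0_compat; lra).
      f_equal. field. lra. }
  enough (0 <= (1 / s ^ 2 - 1 - g / (z - g)) * L) by (unfold Rdiv in *; lra).
  apply Rmult_le_pos; [| lra].
  rewrite Hs2.
  replace (1 / (1 - (a + g) / (2 * z)) - 1 - g / (z - g)) with
    ((a - g) * z / ((z - g) * (2 * z - (a + g)))) by (field; lra).
  apply Rdiv_le_0_compat; [nra | apply Rmult_lt_0_compat; lra].
Qed.

Lemma theta_upper_estimate :
  - Rpower (2 * z) (3 / 2) * prim (sqrt (2 * z - 2 * a)) (sqrt (a + g + (2 * z - 2 * a))) <
  ln (8 * z / (a + g)) - 2 + 3 * a / (2 * (z - a)) * ln (2 * z / (a + g)).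
Proof.
  set (c := sqrt (2 * z - 2 * a)).
  assert (Hcc : c * c = 2 * z - 2 * a) by (apply sqrt_sqrt; lra).
  set (kh := 3 * a / (2 * (z - a))).
  set (De := ln (2 * a) - ln (a + g)).
  assert (HDe : 0 <= De) by (pose proof (ln_le (a + g) (2 * a) ltac:(lra) ltac:(lra)); unfold De; lra).
  (* Moving [sigma 0 = a + g] up to [2 a] costs at most a logarithmic term. *)
  assert (Hshift : - Rpower (2 * z) (3 / 2) * prim c (sqrt (a + g + c * c)) <=
                   - Rpower (2 * z) (3 / 2) * prim c (sqrt (2 * z))
                   + Rpower (2 * z) (3 / 2) * Rpower (2 * z - a) (- (3 / 2)) * De).
  { pose proof (prim_sqrt_increment_le c a (a + g) (2 * a) ltac:(apply sqrt_lt_R0; lra)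
                  ltac:(lra) ltac:(lra)) as H.
    replace (2 * a + c * c) with (2 * z) in H by lra.
    replace (a + c * c) with (2 * z - a) in H by lra.
    pose proof (Rpower_pos (2 * z) (3 / 2)). unfold De. nra. }
  assert (HDe' : Rpower (2 * z) (3 / 2) * Rpower (2 * z - a) (- (3 / 2)) * De <= (1 + kh) * De)
    by (apply Rmult_le_compat_r, Rpower_3_2_ratio_le; lra).
  pose proof (unit_interval_1_sub_div (2 * a) (2 * z) ltac:(lra)) as Hu.
  rewrite Hcc in Hshift. unfold c in Hshift. rewrite phi_prim_sqrt in Hshift by lra.
  set (r := sqrt (1 - 2 * a / (2 * z))) in *.
  assert (Hr2 : r ^ 2 = 1 - 2 * a / (2 * z)) by (apply pow2_sqrt; lra).
  pose proof (phi_lt r (sqrt_unit_interval _ Hu)) as Hlt.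
  replace (3 * (1 - r ^ 2) / (2 * r ^ 2)) with kh in Hlt by (rewrite Hr2; unfold kh; field; lra).
  replace (- ln (1 - r ^ 2)) with (ln (z / a)) in Hlt.
  2:{ rewrite Hr2, <- ln_Rinv by lra. f_equal. field. lra. }
  unfold c. rewrite ln_8_ratio.
  replace (ln (2 * z / (a + g))) with (ln (z / a) + De).
  2:{ unfold De. rewrite <- ln_div, <- ln_mult by (try apply Rdiv_lt_0_compat; lra).
      f_equal. field. lra. }
  lra.
Qed.

End Estimates.

Lemma cmp_prim_0 x y c :
  cmp_prim x y c 0 = 2 * sqrt 2 * prim c (sqrt ((x + y) / 2 + sqrt (x * y) + c * c)).
Proof. unfold cmp_prim. now rewrite sigma_0. Qed.

Lemma RInt_gen_RD_integrand_estimates x y z :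
  0 <= x -> 0 <= y -> 0 < x + y -> 0 < z -> (x + y) / 2 < z ->
  ln (8 * z / ((x + y) / 2 + sqrt (x * y))) - 2 + sqrt (x * y) / (z - sqrt (x * y)) *
    ln (2 * z / ((x + y) / 2 + sqrt (x * y)))
  < Rpower z (3 / 2) * RInt_gen (RD_integrand x y z) (at_right 0) (Rbar_locally p_infty) <
  ln (8 * z / ((x + y) / 2 + sqrt (x * y))) - 2 + 3 * ((x + y) / 2) / (2 * (z - (x + y) / 2)) *
    ln (2 * z / ((x + y) / 2 + sqrt (x * y))).
Proof.
  intros Hx Hy Hxy Hz Haz.
  pose proof (sqrt_pos (x * y)). pose proof (sqrt_mul_le_mean x y Hx Hy).
  set (a := (x + y) / 2) in *. set (g := sqrt (x * y)) in *.
  assert (Hc1 : sqrt (2 * z - (a + g)) * sqrt (2 * z - (a + g)) = 2 * z - (a + g))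
    by (apply sqrt_sqrt; lra).
  assert (Hc2 : sqrt (2 * z - 2 * a) * sqrt (2 * z - 2 * a) = 2 * z - 2 * a)
    by (apply sqrt_sqrt; lra).
  destruct (RInt_gen_RD_integrand_bounds x y z Hx Hy Hxy Hz
              (sqrt (2 * z - (a + g))) (sqrt (2 * z - 2 * a))) as [Hlo Hhi];
    [apply sqrt_lt_R0; lra | apply sqrt_lt_R0; lra | fold a g; lra | fold a g; lra |].
  rewrite !cmp_prim_0, Hc1, Hc2 in *. fold a g in Hlo, Hhi.
  replace (a + g + (2 * z - (a + g))) with (2 * z) in Hlo by ring.
  pose proof (theta_lower_estimate a g z ltac:(lra) ltac:(unfold a in *; lra)) as Hlow.
  pose proof (theta_upper_estimate a g z ltac:(lra) ltac:(unfold a in *; lra)) as Hup.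
  rewrite Rpower_3_2_double in Hlow, Hup by lra.
  pose proof (Rpower_pos z (3 / 2)) as HP.
  set (I := RInt_gen (RD_integrand x y z) (at_right 0) (Rbar_locally p_infty)) in *.
  split.
  - assert (Rpower z (3 / 2) * - (2 * sqrt 2 * prim (sqrt (2 * z - (a + g))) (sqrt (2 * z)))
            <= Rpower z (3 / 2) * I) by (apply Rmult_le_compat_l; lra).
    lra.
  - assert (Rpower z (3 / 2) * I <= Rpower z (3 / 2) *
            - (2 * sqrt 2 * prim (sqrt (2 * z - 2 * a)) (sqrt (a + g + (2 * z - 2 * a)))))
      by (apply Rmult_le_compat_l; lra).
    lra.
Qed.

Lemma exists_scaled_ratio z L lo hi W : 0 < z -> 0 < L -> lo * L < W < hi * L ->
  exists theta, z * lo < theta < z * hi /\ W = theta / z * L.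
Proof.
  intros Hz HL HW. exists (z * W / L). split; [split |].
  - enough (0 < z * W / L - z * lo) by lra.
    replace (z * W / L - z * lo) with (z * (W - lo * L) / L) by (field; lra).
    apply Rdiv_lt_0_compat; [apply Rmult_lt_0_compat |]; lra.
  - enough (0 < z * hi - z * W / L) by lra.
    replace (z * hi - z * W / L) with (z * (hi * L - W) / L) by (field; lra).
    apply Rdiv_lt_0_compat; [apply Rmult_lt_0_compat |]; lra.
  - field. lra.
Qed.

Theorem mainTheorem6 (x y z : R) :
  0 <= x -> 0 <= y -> 0 < x + y -> 0 < z ->
  (x + y) / 2 < z ->
  let a := (x + y) / 2 in
  let g := sqrt (x * y) in
  exists theta : R,
    g / (1 - g / z) < theta /\ theta < 3 * a / (2 * (1 - a / z)) /\
    R_D x y z =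
      3 / (2 * Rpower z (3 / 2)) *
        (ln (8 * z / (a + g)) - 2 + theta / z * ln (2 * z / (a + g))).
Proof.
  intros Hx Hy Hxy Hz Haz a g.
  pose proof (sqrt_pos (x * y)). pose proof (sqrt_mul_le_mean x y Hx Hy).
  pose proof (RInt_gen_RD_integrand_estimates x y z Hx Hy Hxy Hz Haz) as Hest. fold a g in Hest.
  set (I := RInt_gen (RD_integrand x y z) (at_right 0) (Rbar_locally p_infty)) in *.
  destruct (exists_scaled_ratio z (ln (2 * z / (a + g))) (g / (z - g)) (3 * a / (2 * (z - a)))
              (Rpower z (3 / 2) * I - ln (8 * z / (a + g)) + 2)) as [theta [Htheta HW]];
    [lra | apply ln_ratio_pos; unfold a, g in *; lra | lra |].
  exists theta. split; [| split].
  - replace (g / (1 - g / z)) with (z * (g / (z - g))) by (field; unfold a, g in *; lra). lra.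
  - replace (3 * a / (2 * (1 - a / z))) with (z * (3 * a / (2 * (z - a))))
      by (field; unfold a in *; lra).
    lra.
  - unfold R_D. fold I. rewrite <- HW. pose proof (Rpower_pos z (3 / 2)). field. lra.
Qed.
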